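(* Let $V_0$ be a nonlocal vertex algebra such that every $V_0$-module is completely reducible. Regard $V=V_0[[\hbar]]$ as an $\hbar$-adic nonlocal vertex algebra. Then every $V$-module is completely reducible, i.e. for every $V$-module $W$ and every submodule $W'\subseteq W$ there is a submodule $W''\subseteq W$ with $W=W'\oplus W''$.
   Context: Let $\hbar$ be a formal variable. A $\mathbb{C}[[\hbar]]$-module is topologically free if it is of the form $W_0[[\hbar]]$ for a complex vector space $W_0$. An ordinary nonlocal vertex algebra $V_0$ makes $V_0[[\hbar]]$ an $\hbar$-adic nonlocal vertex algebra by $\mathbb{C}[[\hbar]]$-linear extension. A module over an $\hbar$-adic nonlocal vertex algebra is by definition topologically free. For a $\mathbb{C}[[\hbar]]$-submodule $U$ of a topologically free module $W$, set $[U]=\{w\in W:\hbar^n w\in U\text{ for some }n\ge 1\}$ and let $\overline{U}$ be its $\hbar$-adic closure. Convention: a submodule of a module $W$ over an $\hbar$-adic nonlocal vertex algebra $V$ is a $\mathbb{C}[[\hbar]]$-submodule $W_1$ stable under all operators $u_n$ ($u\in V$) such that $\overline{W_1}=W_1$ and $[W_1]=W_1$. A $V_0$-module is completely reducible if every submodule has a complementary submodule. *)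

From HB Require Import structures.
From mathcomp Require Import all_boot all_order all_algebra.
From mathcomp Require Import all_classical reals.
From mathcomp Require Import complex.

Set Implicit Arguments.
Unset Strict Implicit.
Unset Printing Implicit Defensive.

Import Order.TTheory GRing.Theory Num.Theory.
Local Open Scope ring_scope.
Local Open Scope classical_set_scope.

(* Conventions: a vertex operator Y(u,x) = \sum_{n in Z} u_n x^{-n-1} is encoded
   by its modes  Y u n = u_n.  All formal-series identities are written out
   coefficientwise. *)

Section Defs.
Variable K : fieldType.

Definition binz (z : int) (i : nat) : int :=
  match z with
  | Posz n => ('C(n, i))%:Z
  | Negz n => (-1) ^+ i * ('C(n + i, i))%:Z
  end.

(* finitely supported sum over nat (the terms will always be finitely supported) *)
Definition fsum (M : zmodType) (f : nat -> M) : M := \sum_(i \in [set: nat]) f i.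

Definition bilinear_modes (V W : lmodType K) (Y : V -> int -> W -> W) : Prop :=
  (forall (a : K) u u' n w, Y (a *: u + u') n w = a *: Y u n w + Y u' n w) /\
  (forall (a : K) u n w w', Y u n (a *: w + w') = a *: Y u n w + Y u n w').

(* Y(u,x)w in W((x)) *)
Definition truncated (V W : lmodType K) (Y : V -> int -> W -> W) : Prop :=
  forall u w, exists N : int, forall n : int, N <= n -> Y u n w = 0.

(* coefficient of x0^a x2^b in (x0+x2)^l Y_W(u,x0+x2) Y_W(v,x2) w *)
Definition wa_lhs (V W : lmodType K) (YW : V -> int -> W -> W)
  (l : nat) (u v : V) (w : W) (a b : int) : W :=
  fsum (fun i : nat => YW u (Posz l - 1 - a - Posz i) (YW v (Posz i - b - 1) w)
                         *~ binz (a + Posz i) i).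

(* coefficient of x0^a x2^b in (x0+x2)^l Y_W(Y(u,x0)v,x2) w *)
Definition wa_rhs (V W : lmodType K) (YV : V -> int -> V -> V)
  (YW : V -> int -> W -> W) (l : nat) (u v : V) (w : W) (a b : int) : W :=
  \sum_(j < l.+1) YW (YV u (Posz l - Posz j - a - 1) v) (Posz j - b - 1) w *+ 'C(l, j).

Definition weak_assoc (V W : lmodType K) (YV : V -> int -> V -> V)
  (YW : V -> int -> W -> W) : Prop :=
  forall u v w, exists l : nat, forall a b : int,
    wa_lhs YW l u v w a b = wa_rhs YV YW l u v w a b.

Definition is_nlva (V : lmodType K) (vac : V) (Y : V -> int -> V -> V) : Prop :=
  [/\ bilinear_modes Y, truncated Y,
      (forall n v, Y vac n v = if n == -1 then v else 0),
      ((forall v (n : int), 0 <= n -> Y v n vac = 0) /\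
       (forall v, Y v (-1) vac = v)) & weak_assoc Y Y].

Definition is_module (V : lmodType K) (vac : V) (YV : V -> int -> V -> V)
  (W : lmodType K) (YW : V -> int -> W -> W) : Prop :=
  [/\ bilinear_modes YW, truncated YW,
      (forall n w, YW vac n w = if n == -1 then w else 0) & weak_assoc YV YW].

Definition submodule (V W : lmodType K) (YW : V -> int -> W -> W) (W1 : W -> Prop) : Prop :=
  [/\ W1 0, (forall w w', W1 w -> W1 w' -> W1 (w + w')),
      (forall (a : K) w, W1 w -> W1 (a *: w)) &
      (forall u n w, W1 w -> W1 (YW u n w))].

Definition direct_sum_decomp (W : zmodType) (W1 W2 : W -> Prop) : Prop :=
  (forall w, exists w1 w2, [/\ W1 w1, W2 w2 & w = w1 + w2]) /\
  (forall w, W1 w -> W2 w -> w = 0).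

Definition completely_reducible (V W : lmodType K) (YW : V -> int -> W -> W) : Prop :=
  forall W1 : W -> Prop, submodule YW W1 ->
    exists W2 : W -> Prop, submodule YW W2 /\ direct_sum_decomp W1 W2.

(* A topologically free C[[h]]-module W0[[h]] is modelled by coefficient
   sequences  nat -> W0  (w = \sum_k w k h^k); C[[h]] is  nat -> K. *)

Definition szero (M : zmodType) : nat -> M := fun _ => 0.
Definition sadd (M : zmodType) (f g : nat -> M) : nat -> M := fun k => f k + g k.
Definition hmul (M : lmodType K) (c : nat -> K) (w : nat -> M) : nat -> M :=
  fun k => \sum_(i < k.+1) c i *: w (k - i)%N.
Definition hpow (M : zmodType) (n : nat) (w : nat -> M) : nat -> M :=
  fun k => if (n <= k)%N then w (k - n)%N else 0.
Definition cong_mod (M : zmodType) (n : nat) (w w' : nat -> M) : Prop :=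
  forall k, (k < n)%N -> w k = w' k.
(* hbar-adically convergent sum of a family, computed coefficientwise *)
Definition ssum (M : zmodType) (f : nat -> nat -> M) : nat -> M :=
  fun k => fsum (fun i => f i k).

(* V = V0[[h]] with the C[[h]]-bilinear extension of Y and vacuum 1 *)
Definition Yext (V0 : lmodType K) (Y : V0 -> int -> V0 -> V0)
  (u : nat -> V0) (n : int) (v : nat -> V0) : nat -> V0 :=
  fun k => \sum_(i < k.+1) Y (u i) n (v (k - i)%N).
Definition vacext (V0 : zmodType) (vac : V0) : nat -> V0 :=
  fun k => if k == 0%N then vac else 0.

Definition hlinear_modes (V0 W0 : lmodType K)
  (YW : (nat -> V0) -> int -> (nat -> W0) -> (nat -> W0)) : Prop :=
  (forall c u u' n w, YW (sadd (hmul c u) u') n w = sadd (hmul c (YW u n w)) (YW u' n w)) /\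
  (forall c u n w w', YW u n (sadd (hmul c w) w') = sadd (hmul c (YW u n w)) (YW u n w')).

(* Y_W(u,x)w in W_h((x)) : modes tend to 0 hbar-adically *)
Definition htruncated (V0 W0 : lmodType K)
  (YW : (nat -> V0) -> int -> (nat -> W0) -> (nat -> W0)) : Prop :=
  forall u w (m : nat), exists N : int, forall n : int, N <= n ->
    cong_mod m (YW u n w) (@szero W0).

Definition hwa_lhs (V0 W0 : lmodType K)
  (YW : (nat -> V0) -> int -> (nat -> W0) -> (nat -> W0))
  (l : nat) u v w (a b : int) : nat -> W0 :=
  ssum (fun (i : nat) k =>
          (YW u (Posz l - 1 - a - Posz i) (YW v (Posz i - b - 1) w) k) *~ binz (a + Posz i) i).

Definition hwa_rhs (V0 W0 : lmodType K) (Y : V0 -> int -> V0 -> V0)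
  (YW : (nat -> V0) -> int -> (nat -> W0) -> (nat -> W0))
  (l : nat) u v w (a b : int) : nat -> W0 :=
  fun k => \sum_(j < l.+1)
     (YW (Yext Y u (Posz l - Posz j - a - 1) v) (Posz j - b - 1) w k) *+ 'C(l, j).

Definition is_hmodule (V0 : lmodType K) (vac : V0) (Y : V0 -> int -> V0 -> V0)
  (W0 : lmodType K) (YW : (nat -> V0) -> int -> (nat -> W0) -> (nat -> W0)) : Prop :=
  [/\ hlinear_modes YW, htruncated YW,
      (forall n w, YW (vacext vac) n w = if n == -1 then w else @szero W0) &
      (forall u v w (m : nat), exists l : nat, forall a b : int,
          cong_mod m (hwa_lhs YW l u v w a b) (hwa_rhs Y YW l u v w a b))].

Definition hsat (M : zmodType) (U : (nat -> M) -> Prop) (w : nat -> M) : Prop :=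
  exists n : nat, (1 <= n)%N /\ U (hpow n w).
Definition hclosure (M : zmodType) (U : (nat -> M) -> Prop) (w : nat -> M) : Prop :=
  forall m : nat, exists w', U w' /\ cong_mod m w w'.

Definition hsubmodule (V0 W0 : lmodType K)
  (YW : (nat -> V0) -> int -> (nat -> W0) -> (nat -> W0))
  (W1 : (nat -> W0) -> Prop) : Prop :=
  [/\ W1 (@szero W0), (forall w w', W1 w -> W1 w' -> W1 (sadd w w')),
      (forall c w, W1 w -> W1 (hmul c w)),
      (forall u n w, W1 w -> W1 (YW u n w)) &
      ((forall w, hclosure W1 w <-> W1 w) /\
       (forall w, hsat W1 w <-> W1 w))].

Definition hdirect_sum_decomp (W0 : zmodType) (W1 W2 : (nat -> W0) -> Prop) : Prop :=
  (forall w, exists w1 w2, [/\ W1 w1, W2 w2 & w = sadd w1 w2]) /\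
  (forall w, W1 w -> W2 w -> w = @szero W0).

Definition hcompletely_reducible (V0 W0 : lmodType K)
  (YW : (nat -> V0) -> int -> (nat -> W0) -> (nat -> W0)) : Prop :=
  forall W1, hsubmodule YW W1 ->
    exists W2, hsubmodule YW W2 /\ hdirect_sum_decomp W1 W2.

End Defs.

From HB Require Import structures.
From mathcomp Require Import all_boot all_order all_algebra.
From mathcomp Require Import all_classical reals.
From mathcomp Require Import complex zify.

Set Implicit Arguments.
Unset Strict Implicit.
Unset Printing Implicit Defensive.

Import Order.TTheory GRing.Theory Num.Theory.
Local Open Scope ring_scope.

(* Write W = W0[[h]].  Every truncation W/h^n W is a V0-module, hence completely
   reducible, so the kernel of W/h^(n+1) W -> W/h^n W has a complement; using
   these complements level by level one lifts the identity of W/hW = W0 to a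
   V0-module map g : W0 -> W with constant term the identity.  Then
   c |-> \sum_k h^k g(c_k) is a C[[h]]-linear isomorphism W0[[h]] -> W
   intertwining the vertex operators.  Given a submodule W1, pick a complement C
   of the image of W1 in W/hW: the image of C[[h]] meets W1 trivially because W1
   is saturated ([W1] = W1), and together with W1 it spans W by h-adic successive
   approximation, because W1 is closed. *)

Lemma coherent_sequence (T : Type) (P : nat -> T -> Prop)
    (R : nat -> T -> T -> Prop) (t0 : T) :
  P 0%N t0 -> (forall n t, P n t -> exists2 t', P n.+1 t' & R n t t') ->
  exists s : nat -> T, forall n, P n (s n) /\ R n (s n) (s n.+1).
Proof.
move=> P0 step.
have : forall nt : nat * T, exists t',
    P nt.1 nt.2 -> P nt.1.+1 t' /\ R nt.1 nt.2 t'.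
  case=> n t; have [/step [t' Pt' Rt']|nPt] := pselect (P n t).
    by exists t'.
  by exists t0 => /nPt.
case/choice => f Hf.
pose s := fix s n := if n is m.+1 then f (m, s m) else t0.
have Ps n : P n (s n) by elim: n => //= n IH; case: (Hf (n, s n) IH).
by exists s => n; split; last by case: (Hf (n, s n) (Ps n)).
Qed.

Section PowerSeries.
Variable K : fieldType.

Definition hvar : nat -> K := fun k => (k == 1)%:R.

Lemma hmul_vacext (M : lmodType K) (a : K) (w : nat -> M) :
  hmul (vacext a) w = fun k => a *: w k.
Proof.
apply: funext => k; rewrite /hmul big_ord_recl /vacext /= subn0.
by rewrite big1 ?addr0 // => i _; rewrite scale0r.
Qed.

Lemma vacext_lin (M : lmodType K) (a : K) (u u' : M) :
  vacext (a *: u + u') = sadd (hmul (vacext a) (vacext u)) (vacext u').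
Proof.
rewrite hmul_vacext; apply: funext => k; rewrite /sadd /vacext.
by case: (k == 0%N); rewrite ?scaler0 ?addr0.
Qed.

Lemma hmul_hvar (M : lmodType K) (w : nat -> M) : hmul hvar w = hpow 1 w.
Proof.
apply: funext => -[|k]; rewrite /hmul /hpow /hvar.
  by rewrite big_ord1 scale0r.
rewrite big_ord_recl big_ord_recl /= scale0r scale1r add0r subn1.
by rewrite big1 ?addr0 // => i _; rewrite scale0r.
Qed.

Lemma hpow0 (M : zmodType) (w : nat -> M) : hpow 0 w = w.
Proof. by apply: funext => k; rewrite /hpow subn0. Qed.

Lemma hpowS (M : zmodType) n (w : nat -> M) : hpow n.+1 w = hpow 1 (hpow n w).
Proof.
by apply: funext => -[|k] //; rewrite /hpow /= subn1 subSS ltnS.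
Qed.

Lemma hpow_inj (M : zmodType) n : injective (@hpow M n).
Proof.
move=> w w' E; apply: funext => k.
by move: (congr1 (fun f => f (k + n)%N) E); rewrite /hpow leq_addl addnK.
Qed.

Lemma hpow_shift (M : zmodType) n (w : nat -> M) :
  cong_mod n w (@szero M) -> w = hpow n (fun k => w (k + n)%N).
Proof.
move=> w0; apply: funext => k; rewrite /hpow.
by case: leqP => [/subnK -> | /w0].
Qed.

Lemma cong_mod_le (M : zmodType) m m' (y y' : nat -> M) :
  (m' <= m)%N -> cong_mod m y y' -> cong_mod m' y y'.
Proof. by move=> le_m y_y' j lt_j; apply/y_y'/(leq_trans lt_j). Qed.

Lemma cong_mod_eq (M : zmodType) (y y' : nat -> M) :
  (forall m, cong_mod m y y') -> y = y'.
Proof. by move=> y_y'; apply: funext => j; apply: (y_y' j.+1). Qed.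

Lemma cong_mod_diag (M : zmodType) (s : nat -> nat -> M) :
  (forall n, cong_mod n (s n.+1) (s n)) ->
  forall n, cong_mod n (fun k => s k.+1 k) (s n).
Proof.
move=> s_coh.
have s_le n m : (n <= m)%N -> cong_mod n (s m) (s n).
  elim: m => [|m IH]; first by rewrite leqn0 => /eqP ->.
  rewrite leq_eqVlt ltnS => /predU1P [-> //| le_nm] j lt_jn.
  by rewrite (s_coh m j (leq_trans lt_jn le_nm)) IH.
by move=> n k lt_kn; rewrite (s_le k.+1 n).
Qed.

(* [hseries F] is the sum of the [h^k F k]. *)
Definition hseries (M : zmodType) (F : nat -> nat -> M) : nat -> M :=
  fun j => \sum_(k < j.+1) F k (j - k)%N.

Lemma hseriesS (M : zmodType) (F : nat -> nat -> M) j :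
  hseries F j.+1 = hseries (fun k => F k.+1) j + F 0%N j.+1.
Proof. by rewrite /hseries big_ord_recl /= subn0 addrC. Qed.

Lemma hseries_split (M : zmodType) (F : nat -> nat -> M) :
  hseries F = sadd (hpow 1 (hseries (fun k => F k.+1))) (F 0%N).
Proof.
apply: funext => -[|j]; rewrite /sadd /hpow /=.
  by rewrite /hseries big_ord1 add0r.
by rewrite subn1 hseriesS.
Qed.

Lemma hseries_vacext (M : zmodType) (w : nat -> M) :
  hseries (fun k => vacext (w k)) = w.
Proof.
apply: funext => j; elim: j w => [|j IH] w; first by rewrite /hseries big_ord1.
by rewrite hseriesS IH /vacext /= addr0.
Qed.

Lemma hseries_assoc (M : zmodType) (F : nat -> nat -> nat -> M) :
  hseries (fun i => hseries (F i)) =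
  hseries (fun j l => \sum_(i < j.+1) F i (j - i)%N l).
Proof.
apply: funext => m; elim: m F => [|m IH] F; first by rewrite /hseries !big_ord1.
rewrite hseriesS IH [RHS]hseriesS /= hseriesS big_ord1 subnn.
have -> : hseries (fun k l => \sum_(i < k.+2) F i (k.+1 - i)%N l) m =
    hseries (fun k l => \sum_(i < k.+1) F i.+1 (k - i)%N l) m +
    hseries (fun k => F 0%N k.+1) m.
  by rewrite /hseries -big_split; apply: eq_bigr => k _; rewrite big_ord_recl addrC.
by rewrite addrA.
Qed.

End PowerSeries.

Section HLinearModes.
Variables (K : fieldType) (V0 W0 : lmodType K).
Variable YW : (nat -> V0) -> int -> (nat -> W0) -> (nat -> W0).
Hypothesis YW_lin : hlinear_modes YW.

Lemma hmodes_hseriesr u n (F : nat -> nat -> W0) :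
  YW u n (hseries F) = hseries (fun k => YW u n (F k)).
Proof.
apply: funext => j; elim: j F => [|j IH] F;
  rewrite hseries_split -hmul_hvar YW_lin.2 /sadd hmul_hvar /hpow /=.
  by rewrite add0r /hseries big_ord1.
by rewrite subn1 IH hseriesS.
Qed.

Lemma hmodes_hseriesl (U : nat -> nat -> V0) n w :
  YW (hseries U) n w = hseries (fun k => YW (U k) n w).
Proof.
apply: funext => j; elim: j U => [|j IH] U;
  rewrite hseries_split -hmul_hvar YW_lin.1 /sadd hmul_hvar /hpow /=.
  by rewrite add0r /hseries big_ord1.
by rewrite subn1 IH hseriesS.
Qed.

Lemma hmodes_congr m u n w w' :
  cong_mod m w w' -> cong_mod m (YW u n w) (YW u n w').
Proof.
move=> w_w' j lt_jm.
rewrite -(hseries_vacext w) -(hseries_vacext w') !hmodes_hseriesr.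
apply: eq_bigr => k _; rewrite w_w' //.
exact: leq_ltn_trans (leq_ord k) lt_jm.
Qed.

Lemma hmodes0r u n : YW u n (@szero W0) = @szero W0.
Proof.
have E : @szero W0 = sadd (hmul (vacext (-1)) (@szero W0)) (@szero W0).
  by rewrite hmul_vacext; apply: funext => k; rewrite /sadd /szero scaler0 addr0.
rewrite {1}E YW_lin.2 hmul_vacext.
by apply: funext => k; rewrite /sadd scaleN1r addNr.
Qed.

End HLinearModes.

Section Truncation.
Variables (K : fieldType) (W0 : lmodType K).

(* W0[[h]] modulo h^n is represented by the first n coefficients. *)
Definition trunc n (y : nat -> W0) : {ffun 'I_n -> W0} := [ffun i : 'I_n => y i].

Definition untrunc n (x : {ffun 'I_n -> W0}) : nat -> W0 :=
  fun j => if insub j is Some i then x i else 0.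

Lemma untrunc_ord n (x : {ffun 'I_n -> W0}) (i : 'I_n) : untrunc x i = x i.
Proof. by rewrite /untrunc valK. Qed.

Lemma truncK n : cancel (@untrunc n) (trunc n).
Proof. by move=> x; apply/ffunP => i; rewrite ffunE untrunc_ord. Qed.

Lemma trunc_eqP n (y y' : nat -> W0) : trunc n y = trunc n y' <-> cong_mod n y y'.
Proof.
split=> [E j lt_jn | y_y'].
  by move: (congr1 (fun x : {ffun 'I_n -> W0} => x (Ordinal lt_jn)) E); rewrite !ffunE.
by apply/ffunP => i; rewrite !ffunE y_y'.
Qed.

Lemma untruncK n (y : nat -> W0) : cong_mod n (untrunc (trunc n y)) y.
Proof. by apply/trunc_eqP; rewrite truncK. Qed.

Lemma trunc_untrunc_le m n (y : nat -> W0) :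
  (m <= n)%N -> trunc m (untrunc (trunc n y)) = trunc m y.
Proof. by move=> le_mn; apply/trunc_eqP/(cong_mod_le le_mn)/untruncK. Qed.

Lemma trunc_szero n : trunc n (@szero W0) = 0.
Proof. by apply/ffunP => i; rewrite !ffunE. Qed.

Lemma trunc_lin n a (y y' : nat -> W0) :
  trunc n (sadd (hmul (vacext a) y) y') = a *: trunc n y + trunc n y'.
Proof. by apply/ffunP => i; rewrite hmul_vacext !ffunE. Qed.

Lemma untrunc_lin n a (x x' : {ffun 'I_n -> W0}) :
  untrunc (a *: x + x') = sadd (hmul (vacext a) (untrunc x)) (untrunc x').
Proof.
rewrite hmul_vacext; apply: funext => j; rewrite /sadd /untrunc.
by case: insub => [i|]; rewrite ?ffunE ?scaler0 ?addr0.
Qed.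

Lemma trunc_fsum n N (F : nat -> nat -> W0) :
  (forall i, (N <= i)%N -> cong_mod n (F i) (@szero W0)) ->
  fsum (fun i => trunc n (F i)) = trunc n (ssum F).
Proof.
have fsum_bounded (M : zmodType) (f : nat -> M) :
    (forall i, (N <= i)%N -> f i = 0) -> fsum f = \sum_(i < N) f i.
  move=> f0; rewrite /fsum (fsbigE (iota 0 N)) ?iota_uniq //.
    rewrite -(big_mkord xpredT) /index_iota subn0; apply: eq_bigl => i.
    exact/mem_set.
  by move=> i _; rewrite mem_iota add0n leq0n /= -leqNgt => /f0.
move=> F0; rewrite fsum_bounded => [|i /F0 /trunc_eqP ->]; last exact: trunc_szero.
apply/ffunP => i; rewrite sum_ffunE ffunE /ssum fsum_bounded.
  by apply: eq_bigr => k _; rewrite ffunE.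
by move=> k /F0 ->.
Qed.

End Truncation.

Section BilinearModes.
Variables (K : fieldType) (V W : lmodType K) (YW : V -> int -> W -> W).

Lemma bilinear_modes0l : bilinear_modes YW -> forall n w, YW 0 n w = 0.
Proof.
by case=> YW_lin _ n w; have := YW_lin (-1) 0 0 n w; rewrite scaler0 addr0 scaleN1r addNr.
Qed.

Lemma bilinear_modes0r : bilinear_modes YW -> forall u n, YW u n 0 = 0.
Proof.
by case=> _ YW_lin u n; have := YW_lin (-1) u n 0 0; rewrite scaler0 addr0 scaleN1r addNr.
Qed.

Lemma submodule_eq0 : bilinear_modes YW -> submodule YW (fun x => x = 0).
Proof.
move=> YW_bilin; split=> [//|_ _ -> ->|a _ ->|u n _ ->].
- by rewrite addr0.
- by rewrite scaler0.
- exact: bilinear_modes0r.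
Qed.

End BilinearModes.

Section ModuleMaps.
Variables (K : fieldType) (V W W' : lmodType K).
Variables (YW : V -> int -> W -> W) (YW' : V -> int -> W' -> W').
Variable f : W -> W'.
Hypothesis f_lin : forall a x y, f (a *: x + y) = a *: f x + f y.
Hypothesis f_hom : forall u n x, f (YW u n x) = YW' u n (f x).

Lemma linear_map0 : f 0 = 0.
Proof. by have := f_lin (-1) 0 0; rewrite scaler0 addr0 scaleN1r addNr. Qed.

Lemma linear_mapD x y : f (x + y) = f x + f y.
Proof. by rewrite -{1}[x]scale1r f_lin scale1r. Qed.

Lemma linear_mapZ a x : f (a *: x) = a *: f x.
Proof. by rewrite -[a *: x]addr0 f_lin linear_map0 addr0. Qed.

Lemma submodule_preimage S : submodule YW' S -> submodule YW (fun x => S (f x)).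
Proof.
case=> S0 SD SZ SY; split=> [|x y|a x|u n x];
  by rewrite ?linear_map0 ?linear_mapD ?linear_mapZ ?f_hom; auto.
Qed.

Lemma hom_section :
  bilinear_modes YW' -> (forall y, exists x, f x = y) -> completely_reducible YW ->
  exists sigma : W' -> W,
    [/\ forall a y y', sigma (a *: y + y') = a *: sigma y + sigma y',
        forall u n y, sigma (YW' u n y) = YW u n (sigma y) & cancel sigma f].
Proof.
move=> YW'_bilin f_surj YW_cr.
have [C [[_ CD CZ CY] [Cdec Cint]]] :=
  YW_cr _ (submodule_preimage (submodule_eq0 YW'_bilin)).
have C_uniq c c' : C c -> C c' -> f c = f c' -> c = c'.
  move=> Cc Cc' E; apply/eqP; rewrite -subr_eq0; apply/eqP.
  rewrite -scaleN1r addrC; apply: Cint; last exact: CD (CZ _ _ Cc') Cc.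
  by rewrite f_lin E scaleN1r addNr.
have C_lift y : exists c, C c /\ f c = y.
  have [x <-] := f_surj y; have [k [c [/= fk0 Cc ->]]] := Cdec x.
  by exists c; rewrite linear_mapD fk0 add0r.
have [sigma sigmaP] := choice C_lift.
have sigmaC y : C (sigma y) by case: (sigmaP y).
have sigmaK : cancel sigma f by move=> y; case: (sigmaP y).
exists sigma; split=> [a y y'|u n y|//].
- by apply: C_uniq; rewrite ?f_lin ?sigmaK //; apply: CD; [apply: CZ|].
- by apply: C_uniq; rewrite ?f_hom ?sigmaK //; apply: CY.
Qed.

End ModuleMaps.

Lemma completely_reducible_transport (K : fieldType) (V W W' : lmodType K)
    (YW : V -> int -> W -> W) (YW' : V -> int -> W' -> W')
    (f : W -> W') (f' : W' -> W) :
  (forall a x y, f (a *: x + y) = a *: f x + f y) ->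
  (forall u n x, f (YW u n x) = YW' u n (f x)) ->
  cancel f f' -> cancel f' f -> completely_reducible YW' -> completely_reducible YW.
Proof.
move=> f_lin f_hom fK f'K YW'_cr W1 W1_sub.
have f'_lin a y y' : f' (a *: y + y') = a *: f' y + f' y'.
  by apply: (can_inj fK); rewrite f_lin !f'K.
have f'_hom u n y : f' (YW' u n y) = YW u n (f' y).
  by apply: (can_inj fK); rewrite f_hom !f'K.
have [C' [C'_sub [C'dec C'int]]] := YW'_cr _ (submodule_preimage f'_lin f'_hom W1_sub).
exists (fun x => C' (f x)); split; first exact (submodule_preimage f_lin f_hom C'_sub).
split=> [x|x W1x C'x].
  have [y [c [W1y C'c fx]]] := C'dec (f x).
  exists (f' y), (f' c); split; rewrite ?f'K //.
  by rewrite -[f' y]scale1r -f'_lin scale1r -fx fK.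
by rewrite -[x]fK (C'int (f x)) ?fK // (linear_map0 f'_lin).
Qed.

Lemma Yext_vacext (K : fieldType) (V0 : lmodType K) (Y : V0 -> int -> V0 -> V0) :
  bilinear_modes Y -> forall u n v, Yext Y (vacext u) n (vacext v) = vacext (Y u n v).
Proof.
move=> Y_bilin u n v; apply: funext => -[|k]; rewrite /Yext /vacext.
  by rewrite big_ord1.
rewrite big_ord_recl /= bilinear_modes0r // add0r big1 // => i _.
exact: bilinear_modes0l.
Qed.

Section TruncatedModule.
Variables (K : fieldType) (V0 W0 : lmodType K).
Variable YW : (nat -> V0) -> int -> (nat -> W0) -> (nat -> W0).
Hypothesis YW_lin : hlinear_modes YW.

(* The V0-module W/h^n W; only the constant elements of V0[[h]] act. *)
Definition truncY n (v : V0) (p : int) (x : {ffun 'I_n -> W0}) :=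
  trunc n (YW (vacext v) p (untrunc x)).
Arguments truncY n v p x : clear implicits.

Lemma truncY_trunc n v p y : truncY n v p (trunc n y) = trunc n (YW (vacext v) p y).
Proof. by apply/trunc_eqP/hmodes_congr/untruncK. Qed.

Lemma truncY_module (vac : V0) (Y : V0 -> int -> V0 -> V0) n :
  bilinear_modes Y -> is_hmodule vac Y YW -> is_module vac Y (truncY n).
Proof.
move=> Y_bilin; case => _ YW_trunc YW_vac YW_assoc; split.
- split=> [a u u' p x|a u p x x'].
    by rewrite /truncY vacext_lin YW_lin.1 trunc_lin.
  by rewrite /truncY untrunc_lin YW_lin.2 trunc_lin.
- move=> u x; have [N YW_N] := YW_trunc (vacext u) (untrunc x) n.
  by exists N => p le_Np; rewrite /truncY -trunc_szero; apply/trunc_eqP/YW_N.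
- by move=> p x; rewrite /truncY YW_vac; case: eqP; rewrite ?truncK ?trunc_szero.
move=> u v x; have [l YW_l] := YW_assoc (vacext u) (vacext v) (untrunc x) n.
have [N YW_N] := YW_trunc (vacext v) (untrunc x) n.
exists l => a b.
have -> : wa_lhs (truncY n) l u v x a b =
    trunc n (hwa_lhs YW l (vacext u) (vacext v) (untrunc x) a b).
  rewrite /wa_lhs -(trunc_fsum (N := absz (N + b + 1))).
    congr fsum; apply: funext => i; rewrite [truncY n v _ x]/truncY truncY_trunc.
    by apply/ffunP => k; rewrite ffunMzE !ffunE.
  move=> i le_i j lt_jn; rewrite (hmodes_congr _ _ _ (YW_N (Posz i - b - 1) _)) //.
    by rewrite hmodes0r // /szero mul0rz.
  by move: le_i; lia.
have -> : wa_rhs Y (truncY n) l u v x a b =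
    trunc n (hwa_rhs Y YW l (vacext u) (vacext v) (untrunc x) a b).
  apply/ffunP => k; rewrite ffunE sum_ffunE; apply: eq_bigr => j _.
  by rewrite ffunMnE /truncY ffunE Yext_vacext.
exact/trunc_eqP/YW_l.
Qed.

End TruncatedModule.
Arguments truncY {K V0 W0} YW n v p x.

Section Reduction.
Variables (K : fieldType) (V0 W0 : lmodType K).
Variable YW : (nat -> V0) -> int -> (nat -> W0) -> (nat -> W0).
Hypothesis YW_lin : hlinear_modes YW.

(* The V0-module W/hW, identified with W0 through constant terms. *)
Definition Ybar (v : V0) (p : int) (x : W0) : W0 := YW (vacext v) p (vacext x) 0%N.

Lemma Ybar_coef0 v p w : Ybar v p (w 0%N) = YW (vacext v) p w 0%N.
Proof.
have : cong_mod 1 (vacext (w 0%N)) w by case.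
by move/(hmodes_congr YW_lin (vacext v) p)/(_ 0%N isT).
Qed.

Lemma Ybar_completely_reducible :
  completely_reducible (truncY YW 1) -> completely_reducible Ybar.
Proof.
move=> truncY1_cr.
apply: (@completely_reducible_transport _ _ _ _ Ybar (truncY YW 1)
  (fun x : W0 => trunc 1 (vacext x)) (fun y : {ffun 'I_1 -> W0} => y ord0)
  _ _ _ _ truncY1_cr).
- by move=> a x y; rewrite vacext_lin trunc_lin.
- by move=> v p x; rewrite truncY_trunc //; apply/trunc_eqP => -[].
- by move=> x; rewrite ffunE.
- by move=> y; apply/ffunP => i; rewrite ffunE (ord1 i).
Qed.

Definition hom_lift (g : W0 -> nat -> W0) :=
  [/\ forall a x y, g (a *: x + y) = sadd (hmul (vacext a) (g x)) (g y),
      forall x, g x 0%N = x &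
      forall v p x, YW (vacext v) p (g x) = g (Ybar v p x)].

End Reduction.

Section Lifting.
Variables (K : fieldType) (V0 W0 : lmodType K) (vac : V0).
Variable Y : V0 -> int -> V0 -> V0.
Variable YW : (nat -> V0) -> int -> (nat -> W0) -> (nat -> W0).
Hypothesis Y_bilin : bilinear_modes Y.
Hypothesis YW_mod : is_hmodule vac Y YW.
Hypothesis truncY_cr : forall n, completely_reducible (truncY YW n).

Let YW_lin : hlinear_modes YW. Proof. by case: YW_mod. Qed.

Definition lift_mod n (f : W0 -> nat -> W0) :=
  [/\ forall a x y, f (a *: x + y) = sadd (hmul (vacext a) (f x)) (f y),
      forall x, f x 0%N = x &
      forall v p x, cong_mod n (YW (vacext v) p (f x)) (f (Ybar YW v p x))].

Lemma lift_mod_vacext : lift_mod 1 (@vacext W0).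
Proof. by split=> [a x y|x|v p x [|]]; rewrite ?vacext_lin. Qed.

Lemma lift_mod_step n f : lift_mod n.+1 f ->
  exists2 f', lift_mod n.+2 f' & forall x, cong_mod n.+1 (f' x) (f x).
Proof.
case=> f_lin f0 f_hom.
pose pi (x : {ffun 'I_n.+2 -> W0}) := trunc n.+1 (untrunc x).
have pi_lin a x y : pi (a *: x + y) = a *: pi x + pi y.
  by rewrite /pi untrunc_lin trunc_lin.
have pi_hom v p x : pi (truncY YW n.+2 v p x) = truncY YW n.+1 v p (pi x).
  by rewrite /pi truncY_trunc ?YW_lin // /truncY trunc_untrunc_le.
have pi_surj y : exists x, pi x = y.
  by exists (trunc n.+2 (untrunc y)); rewrite /pi trunc_untrunc_le ?truncK.
have [YW'_bilin _ _ _] := truncY_module YW_lin n.+1 Y_bilin YW_mod.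
have [sigma [sigma_lin sigma_hom sigmaK]] :=
  hom_section pi_lin pi_hom YW'_bilin pi_surj (@truncY_cr n.+2).
(* [sigma] is the inverse of [pi] on a complement of its kernel. *)
pose f' x := untrunc (sigma (trunc n.+1 (f x))).
have f'_cong x : cong_mod n.+1 (f' x) (f x).
  by apply/trunc_eqP; rewrite -[trunc n.+1 _]/(pi _) sigmaK.
exists f' => //; split=> [a x y|x|v p x].
- by rewrite /f' f_lin trunc_lin sigma_lin untrunc_lin.
- by rewrite f'_cong.
apply/trunc_eqP; rewrite truncK -[trunc n.+2 _]/(truncY YW n.+2 v p _).
by rewrite -sigma_hom truncY_trunc ?YW_lin //; congr sigma; apply/trunc_eqP/f_hom.
Qed.

Lemma exists_hom_lift : exists g, hom_lift YW g.
Proof.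
have [s s_coh] := coherent_sequence (P := fun n f => lift_mod n.+1 f)
  (R := fun n f f' => forall x, cong_mod n.+1 (f' x) (f x)) lift_mod_vacext lift_mod_step.
pose g x k := s k.+1 x k.
have g_cong n x : cong_mod n (g x) (s n x).
  apply: (cong_mod_diag (s := fun n => s n x)) => m.
  exact/(cong_mod_le (leqnSn m))/(s_coh m).2.
exists g; split=> [a x y|x|v p x].
- apply: funext => k; rewrite /sadd !hmul_vacext /g.
  by case: (s_coh k.+1) => -[-> _ _] _; rewrite /sadd hmul_vacext.
- by rewrite /g; case: (s_coh 1%N) => -[_ -> _].
apply: cong_mod_eq => m j lt_jm.
rewrite (hmodes_congr YW_lin _ _ (g_cong m x)) // (g_cong m _ j lt_jm).
by case: (s_coh m) => -[_ _ s_hom] _; apply: s_hom; apply: ltnW.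
Qed.

End Lifting.

Section HExtension.
Variables (K : fieldType) (V0 W0 : lmodType K).
Variable YW : (nat -> V0) -> int -> (nat -> W0) -> (nat -> W0).
Hypothesis YW_lin : hlinear_modes YW.
Variable g : W0 -> nat -> W0.
Hypothesis g_lift : hom_lift YW g.

Lemma lift_lin a x y : g (a *: x + y) = sadd (hmul (vacext a) (g x)) (g y).
Proof. by case: g_lift. Qed.

Lemma lift_coef0 x : g x 0%N = x.
Proof. by case: g_lift. Qed.

Lemma liftB x y : g (x - y) = fun k => g x k - g y k.
Proof.
rewrite addrC -scaleN1r lift_lin hmul_vacext.
by apply: funext => k; rewrite /sadd scaleN1r addrC.
Qed.

Lemma lift0 : g 0 = @szero W0.
Proof. by rewrite -(subrr 0) liftB; apply: funext => k; rewrite subrr. Qed.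

Lemma liftD x y : g (x + y) = sadd (g x) (g y).
Proof.
rewrite -{1}[x]scale1r lift_lin hmul_vacext.
by apply: funext => k; rewrite /sadd scale1r.
Qed.

Lemma liftZ a x : g (a *: x) = fun k => a *: g x k.
Proof.
rewrite -[a *: x]addr0 lift_lin hmul_vacext lift0.
by apply: funext => k; rewrite /sadd addr0.
Qed.

Lemma lift_sum N (F : nat -> W0) :
  g (\sum_(i < N) F i) = fun k => \sum_(i < N) g (F i) k.
Proof.
apply: funext => k; elim: N => [|N IH]; first by rewrite !big_ord0 lift0.
by rewrite !big_ord_recr liftD /sadd IH.
Qed.

Definition hext (c : nat -> W0) : nat -> W0 := hseries (fun k => g (c k)).

Lemma hext0 : hext (@szero W0) = @szero W0.
Proof. by apply: funext => j; rewrite /hext /hseries big1 // => k _; rewrite lift0. Qed.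

Lemma hext_vacext x : hext (vacext x) = g x.
Proof.
apply: funext => j; rewrite /hext /hseries big_ord_recl /= subn0.
by rewrite big1 ?addr0 // => i _; rewrite lift0.
Qed.

Lemma hextD c c' : hext (sadd c c') = sadd (hext c) (hext c').
Proof.
by apply: funext => j; rewrite /sadd -big_split; apply: eq_bigr => k _; rewrite liftD.
Qed.

Lemma hextB c c' : hext (fun k => c k - c' k) = fun j => hext c j - hext c' j.
Proof. by apply: funext => j; rewrite -sumrB; apply: eq_bigr => k _; rewrite liftB. Qed.

Lemma hext_hmul d c : hmul d (hext c) = hext (hmul d c).
Proof.
have -> : hmul d (hext c) = hseries (fun i => hseries (fun k => g (d i *: c k))).
  apply: funext => j; apply: eq_bigr => i _; rewrite scaler_sumr.
  by apply: eq_bigr => k _; rewrite liftZ.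
rewrite hseries_assoc; apply: funext => j; apply: eq_bigr => i _.
by rewrite /hmul (lift_sum _ (fun k => d k *: c (i - k)%N)).
Qed.

Lemma hext_hpow n c : hext (hpow n c) = hpow n (hext c).
Proof.
elim: n => [|n IH]; first by rewrite !hpow0.
by rewrite hpowS [RHS]hpowS -IH -!hmul_hvar hext_hmul.
Qed.

Lemma hextY u p c : YW u p (hext c) =
  hext (fun j => \sum_(k < j.+1) Ybar YW (u (j - k)%N) p (c k)).
Proof.
have YW_lift x : YW u p (g x) = hseries (fun i => g (Ybar YW (u i) p x)).
  rewrite -{1}[u]hseries_vacext (hmodes_hseriesl YW_lin); congr hseries.
  by apply: funext => i; case: g_lift => _ _ ->.
rewrite /hext (hmodes_hseriesr YW_lin).
under eq_fun do rewrite YW_lift.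
rewrite hseries_assoc; apply: funext => m; apply: eq_bigr => j _.
by rewrite (lift_sum _ (fun k => Ybar YW (u (j - k)%N) p (c k))).
Qed.

Lemma hext_cong_mod m c c' : cong_mod m (hext c) (hext c') <-> cong_mod m c c'.
Proof.
split=> [|c_c' j lt_jm]; last first.
  apply: eq_bigr => k _; rewrite c_c' //; exact: leq_ltn_trans (leq_ord k) lt_jm.
suff hext_cong0 d : cong_mod m (hext d) (@szero W0) -> cong_mod m d (@szero W0).
  move=> hc_hc' j lt_jm; apply/subr0_eq.
  by apply: (hext_cong0 (fun k => c k - c' k)) => // i lt_im; rewrite hextB hc_hc' ?subrr.
elim: m d => [//|m IH] d hd0 j; have d0 := IH d (cong_mod_le (leqnSn m) hd0).
rewrite ltnS leq_eqVlt => /predU1P [->|]; last exact: d0.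
have := hd0 m (ltnSn m); rewrite (hpow_shift d0) hext_hpow /hpow leqnn subnn.
by rewrite /hext /hseries big_ord1 lift_coef0 add0n.
Qed.

End HExtension.

Section Complement.
Variables (K : fieldType) (V0 W0 : lmodType K).
Variable YW : (nat -> V0) -> int -> (nat -> W0) -> (nat -> W0).
Hypothesis YW_lin : hlinear_modes YW.
Variable W1 : (nat -> W0) -> Prop.
Hypothesis W1_sub : hsubmodule YW W1.

Definition hreduce (x : W0) : Prop := exists2 w, W1 w & x = w 0%N.

Lemma hreduce_submodule : submodule (Ybar YW) hreduce.
Proof.
case: W1_sub => W1_0 W1_D W1_hmul W1_Y _; split.
- by exists (@szero W0).
- move=> _ _ [w W1w ->] [w' W1w' ->].
  by exists (sadd w w'); first exact: W1_D.
- move=> a _ [w W1w ->]; exists (hmul (vacext a) w); first exact: W1_hmul.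
  by rewrite hmul_vacext.
- move=> u p _ [w W1w ->]; exists (YW (vacext u) p w); first exact: W1_Y.
  exact: Ybar_coef0 YW_lin _ _ _.
Qed.

Lemma hsubmodule_hpow n w : W1 w -> W1 (hpow n w).
Proof.
case: W1_sub => _ _ W1_hmul _ _ W1w.
elim: n => [|n IH]; first by rewrite hpow0.
by rewrite hpowS -hmul_hvar; apply: W1_hmul.
Qed.

Lemma hsubmodule_hpowV n w : W1 (hpow n w) -> W1 w.
Proof.
case: n => [|n]; first by rewrite hpow0.
by case: W1_sub => _ _ _ _ [_ W1_sat] W1nw; apply/W1_sat; exists n.+1.
Qed.

Variable g : W0 -> nat -> W0.
Hypothesis g_lift : hom_lift YW g.
Variable C : W0 -> Prop.
Hypothesis C_sub : submodule (Ybar YW) C.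
Hypothesis C_compl : direct_sum_decomp hreduce C.

Definition hcomplement (w : nat -> W0) : Prop :=
  exists2 c, (forall k, C (c k)) & w = hext g c.

Lemma hcomplement_closure w : hclosure hcomplement w -> hcomplement w.
Proof.
move=> w_cl.
have : forall m, exists c, (forall k, C (c k)) /\ cong_mod m w (hext g c).
  by move=> m; have [_ [[c Cc ->] w_c]] := w_cl m; exists c.
case/choice => cs csP.
have cs_coh m : cong_mod m (cs m.+1) (cs m).
  apply/(hext_cong_mod g_lift) => j lt_jm.
  by rewrite -(csP m).2 // (csP m.+1).2 // ltnW.
exists (fun k => cs k.+1 k) => [k|]; first exact: (csP k.+1).1.
apply: cong_mod_eq => m j lt_jm; rewrite (csP m).2 //.
by rewrite ((hext_cong_mod g_lift m _ _).2 (cong_mod_diag cs_coh (n := m)) j lt_jm).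
Qed.

Lemma hcomplement_hpowV n w : hcomplement (hpow n w) -> hcomplement w.
Proof.
case=> c Cc nw_c.
have c0 : cong_mod n c (@szero W0).
  apply/(hext_cong_mod g_lift); rewrite (hext0 g_lift) -nw_c => j lt_jn.
  by rewrite /hpow leqNgt lt_jn.
exists (fun k => c (k + n)%N) => [//|]; apply: (@hpow_inj _ n).
by rewrite nw_c {1}(hpow_shift c0) (hext_hpow g_lift).
Qed.

Lemma hcomplement_hsubmodule : hsubmodule YW hcomplement.
Proof.
case: C_sub => C0 CD CZ CY.
have C_sum N (F : 'I_N -> W0) : (forall i, C (F i)) -> C (\sum_(i < N) F i).
  by move=> CF; apply: big_ind.
split.
- by exists (@szero W0); rewrite ?(hext0 g_lift).
- move=> _ _ [c Cc ->] [c' Cc' ->]; exists (sadd c c'); last by rewrite (hextD g_lift).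
  by move=> k; apply: CD.
- move=> d _ [c Cc ->]; exists (hmul d c); last exact: hext_hmul g_lift _ _.
  by move=> k; apply: C_sum => i; apply: CZ.
- move=> u p _ [c Cc ->].
  exists (fun j => \sum_(k < j.+1) Ybar YW (u (j - k)%N) p (c k)).
    by move=> j; apply: C_sum => k; apply: CY.
  exact: hextY.
split=> w; split=> [|w2]; last 2 first.
- by case=> n [_ /hcomplement_hpowV].
- case: w2 => c Cc ->; exists 1%N; split => //.
  exists (hpow 1 c); last by rewrite (hext_hpow g_lift).
  by case=> [|k]; rewrite /hpow //= subn1.
- exact: hcomplement_closure.
- by exists w.
Qed.

Lemma hcomplement_eq0 w : W1 w -> hcomplement w -> w = @szero W0.
Proof.
move=> W1w [c Cc w_c].
suff c0 : forall n, cong_mod n c (@szero W0).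
  by rewrite w_c (cong_mod_eq c0) (hext0 g_lift).
elim=> [//|n IH] j; rewrite ltnS leq_eqVlt => /predU1P [->|]; last exact: IH.
pose c' k := c (k + n)%N.
have W1c' : W1 (hext g c').
  by apply: (hsubmodule_hpowV (n := n)); rewrite -(hext_hpow g_lift) -(hpow_shift IH) -w_c.
have := C_compl.2 (hext g c' 0%N) (ex_intro2 _ _ _ W1c' erefl).
by rewrite /hext /hseries big_ord1 (lift_coef0 g_lift) /c' add0n => ->.
Qed.

Lemma hcomplement_decomp w :
  exists w1 w2, [/\ W1 w1, hcomplement w2 & w = sadd w1 w2].
Proof.
case: W1_sub => W1_0 W1_D _ _ [W1_cl _]; case: C_sub => C0 CD _ _.
pose P n (ce : (nat -> W0) * (nat -> W0)) :=
  [/\ forall k, C (ce.1 k), W1 ce.2 & cong_mod n w (sadd (hext g ce.1) ce.2)].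
(* The coefficient of h^n of the current error is split along hreduce + C. *)
have step n ce : P n ce -> exists2 ce', P n.+1 ce' & cong_mod n ce'.1 ce.1.
  case: ce => c e [/= Cc W1e w_ce].
  have [_ [c0 [[w' W1w' ->] Cc0 r_eq]]] := C_compl.1 (w n - (hext g c n + e n)).
  exists (sadd c (hpow n (vacext c0)), sadd e (hpow n w')); last first.
    by move=> j lt_jn /=; rewrite /sadd /hpow leqNgt lt_jn addr0.
  split=> /=.
  - by move=> k; apply: CD => //; rewrite /hpow /vacext; case: ifP => _; first case: ifP.
  - exact: W1_D (hsubmodule_hpow _ W1w').
  rewrite (hextD g_lift) (hext_hpow g_lift) (hext_vacext g_lift) => j.
  rewrite ltnS leq_eqVlt /sadd /hpow => /predU1P [->|lt_jn].
    rewrite leqnn subnn (lift_coef0 g_lift) -[w n](subrK (hext g c n + e n)) r_eq.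
    by rewrite [RHS]addrACA [LHS]addrC [c0 + _]addrC.
  by rewrite leqNgt lt_jn !addr0; apply: w_ce.
have P0 : P 0%N (@szero W0, @szero W0) by [].
have [s sP] := coherent_sequence P0 step.
pose c k := (s k.+1).1 k.
have c_cong n : cong_mod n c (s n).1 := cong_mod_diag (fun n => (sP n).2) (n := n).
exists (fun j => w j - hext g c j), (hext g c); split.
- apply/W1_cl => m; exists (s m).2; case: (sP m) => -[_ W1s w_s] _; split=> // j lt_jm.
  rewrite w_s // /sadd ((hext_cong_mod g_lift m _ _).2 (c_cong m) j lt_jm).
  by rewrite addrC addKr.
- by exists c => // k; case: (sP k.+1) => -[Cs _ _] _; apply: Cs.
by apply: funext => j; rewrite /sadd subrK.
Qed.

End Complement.

Theorem lemma3p6 (R : realType) (V0 : lmodType (complex R)) (vac : V0)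
  (Y : V0 -> int -> V0 -> V0) :
  is_nlva vac Y ->
  (forall (W : lmodType (complex R)) (YW : V0 -> int -> W -> W),
      is_module vac Y YW -> completely_reducible YW) ->
  forall (W0 : lmodType (complex R))
         (YW : (nat -> V0) -> int -> (nat -> W0) -> (nat -> W0)),
    is_hmodule vac Y YW -> hcompletely_reducible YW.
Proof.
move=> [Y_bilin _ _ _ _] V0_cr W0 YW YW_mod W1 W1_sub.
have YW_lin : hlinear_modes YW by case: YW_mod.
have truncY_cr n : completely_reducible (truncY YW n).
  exact/V0_cr/(truncY_module YW_lin n Y_bilin YW_mod).
have [g g_lift] := exists_hom_lift Y_bilin YW_mod truncY_cr.
have [C [C_sub C_compl]] :=
  Ybar_completely_reducible YW_lin (truncY_cr 1%N) (hreduce_submodule YW_lin W1_sub).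
exists (hcomplement g C); split; first exact: hcomplement_hsubmodule.
split=> [w|w W1w]; first exact (hcomplement_decomp W1_sub g_lift C_sub C_compl w).
exact (hcomplement_eq0 W1_sub g_lift C_compl W1w).
Qed.
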